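(* Let $d=2$ and $\boldsymbol{W}=\mathrm{diag}(\lambda_1,\lambda_2)$ with $\lambda_1,\lambda_2>0$, $\lambda_1+\lambda_2=1$. Let $(\boldsymbol{w},\boldsymbol{H})$ be a random pair, where $\boldsymbol{w}=(w_1,w_2)$ is a unit vector in $\mathbb{R}^2$ with $\mathbb{E}[\boldsymbol{w}\boldsymbol{w}^\top]=\boldsymbol{W}$ and $\boldsymbol{H}$ is a random symmetric $2\times2$ matrix with square-integrable entries whose distribution does not depend on any loss matrix. For a symmetric $2\times2$ matrix $\boldsymbol{L}$ put $\ell=\boldsymbol{w}^\top\boldsymbol{L}\boldsymbol{w}$ and $\widetilde{\boldsymbol{L}}=\ell\boldsymbol{H}$. Suppose $\mathbb{E}[\widetilde{\boldsymbol{L}}]=\boldsymbol{L}$ for every symmetric $2\times2$ matrix $\boldsymbol{L}$. Then for every $\alpha>0$ and every symmetric $\boldsymbol{L}$ with $\boldsymbol{L}\succeq\alpha\boldsymbol{I}$, \[ \mathbb{E}\big[\mathrm{tr}(\boldsymbol{W}\widetilde{\boldsymbol{L}}^2)\big]\ge\frac{\alpha^2}{4\min\{\lambda_1,\lambda_2\}}. \] *)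

From HB Require Import structures.
From mathcomp Require Import all_boot all_order all_algebra.
From mathcomp Require Import all_classical all_reals all_analysis.
Set Implicit Arguments. Unset Strict Implicit. Unset Printing Implicit Defensive.
Import Order.TTheory GRing.Theory Num.Theory.
Local Open Scope ring_scope.

Definition Wdiag (R : ringType) (l1 l2 : R) : 'M[R]_2 :=
  diag_mx (\row_(i < 2) if i == 0 then l1 else l2).

Definition qform (R : ringType) (L : 'M[R]_2) (v : 'cV[R]_2) : R :=
  ((v^T *m L *m v) 0 0).

(** The off-diagonal loss [L0] with ones off the diagonal has [w^T L0 w = 2 w1 w2], so
    unbiasedness forces [E[2 w1 w2 H12] = 1].  By Cauchy–Schwarz (in its AM-GM form
    [y^2 >= 2 s t y - s^2 t^2]) this gives [E[H12^2] >= 1 / E[(2 w1 w2)^2]], and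
    [(w1 w2)^2 <= w_i^2] bounds the denominator by [4 min(l1, l2)].  Finally, for
    [L >= alpha I] the loss [w^T L w] is at least [alpha], and since [l1 + l2 = 1]
    the trace [tr(W (l H)^2)] dominates [l^2 H12^2]. *)
From HB Require Import structures.
From mathcomp Require Import all_boot all_order all_algebra.
From mathcomp Require Import all_classical all_reals all_analysis.
From mathcomp Require Import ring lra measurable_realfun.
Import Order.TTheory GRing.Theory Num.Theory.
Local Open Scope ring_scope.

Lemma ord2_zeroE : (0 : 'I_2) = ord0. Proof. exact/val_inj. Qed.
Lemma ord2_oneE : (1 : 'I_2) = lift ord0 ord0. Proof. exact/val_inj. Qed.

Lemma qform2E (R : comNzRingType) (L : 'M[R]_2) (v : 'cV[R]_2) : qform L v =
  L 0 0 * v 0 0 ^+ 2 + (L 0 1 + L 1 0) * (v 0 0 * v 1 0) + L 1 1 * v 1 0 ^+ 2.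
Proof.
rewrite /qform !mxE !big_ord_recl !big_ord0 /= !mxE !big_ord_recl !big_ord0 /=.
by rewrite !mxE /= ord2_zeroE ord2_oneE; ring.
Qed.

Lemma qform1_unit (R : comNzRingType) (v : 'cV[R]_2) :
  v 0 0 ^+ 2 + v 1 0 ^+ 2 = 1 -> qform 1%:M v = 1.
Proof.
by move=> unit_v; rewrite qform2E !mxE /= !mulr1n !mulr0n !mul1r add0r mul0r addr0.
Qed.

Lemma qform_offdiag_ones (R : comNzRingType) (v : 'cV[R]_2) :
  qform (\matrix_(i, j) (i != j)%:R) v = 2 * (v 0 0 * v 1 0).
Proof. by rewrite qform2E !mxE /=; ring. Qed.

Lemma mxtrace_Wdiag_scale_sqr (R : comNzRingType) (l1 l2 a : R) (M : 'M[R]_2) :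
  \tr (Wdiag l1 l2 *m ((a *: M) *m (a *: M))) =
  a ^+ 2 * (l1 * (M 0 0 ^+ 2 + M 0 1 * M 1 0) + l2 * (M 1 0 * M 0 1 + M 1 1 ^+ 2)).
Proof.
rewrite /mxtrace /Wdiag !big_ord_recl !big_ord0 /= !mxE !big_ord_recl !big_ord0 /=.
by rewrite !mxE !big_ord_recl !big_ord0 /= !mxE /= ord2_zeroE ord2_oneE /=; ring.
Qed.

Lemma Wdiag00 (R : nzRingType) (l1 l2 : R) : Wdiag l1 l2 0 0 = l1.
Proof. by rewrite /Wdiag !mxE /= mulr1n. Qed.

Lemma Wdiag11 (R : nzRingType) (l1 l2 : R) : Wdiag l1 l2 1 1 = l2.
Proof. by rewrite /Wdiag !mxE /= mulr1n. Qed.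

Section UnitVector.
Variables (R : realFieldType) (a b : R).
Hypothesis unit_ab : a ^+ 2 + b ^+ 2 = 1.

Lemma sqr_mul_le_sqrl : (a * b) ^+ 2 <= a ^+ 2.
Proof.
have u := unit_ab; have := sqr_ge0 a; have := sqr_ge0 b; rewrite exprMn.
by set p := a ^+ 2 in u *; set q := b ^+ 2 in u *; nra.
Qed.

Lemma sqr_mul_le_sqrr : (a * b) ^+ 2 <= b ^+ 2.
Proof.
have u := unit_ab; have := sqr_ge0 a; have := sqr_ge0 b; rewrite exprMn.
by set p := a ^+ 2 in u *; set q := b ^+ 2 in u *; nra.
Qed.

Lemma sqr_mul_le1 : (a * b) ^+ 2 <= 1.
Proof. by apply: le_trans sqr_mul_le_sqrl _; rewrite -unit_ab lerDl sqr_ge0. Qed.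

Lemma norm_double_mul_le (y : R) : `|2 * (a * b) * y| <= 1 + y ^+ 2.
Proof.
have u := unit_ab; have := sqr_ge0 (a - b * y); have := sqr_ge0 (a + b * y).
have := sqr_ge0 (y * a); rewrite ler_norml => *; apply/andP; split; nra.
Qed.

End UnitVector.

Lemma sqr_offdiag_le_trace (R : realFieldType) (l1 l2 alpha l : R) (M : 'M[R]_2) :
  0 <= l1 -> 0 <= l2 -> l1 + l2 = 1 -> M 1 0 = M 0 1 -> 0 <= alpha <= l ->
  alpha ^+ 2 * M 0 1 ^+ 2 <= \tr (Wdiag l1 l2 *m ((l *: M) *m (l *: M))).
Proof.
move=> l1_ge0 l2_ge0 l12 Msym /andP[alpha_ge0 alpha_le].
rewrite mxtrace_Wdiag_scale_sqr Msym.
apply: ler_pM; rewrite ?sqr_ge0 ?ler_pXn2r ?nnegrE ?(le_trans alpha_ge0) //.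
have := mulr_ge0 l1_ge0 (sqr_ge0 (M 0 0)); have := mulr_ge0 l2_ge0 (sqr_ge0 (M 1 1)).
rewrite -[M 0 1 ^+ 2]mul1r -l12 -expr2; lra.
Qed.

Section Integrals.
Context {d : measure_display} {T : measurableType d} {R : realType} (mu : measure T R).

Lemma integrable_EFin_dominated (f g : T -> R) :
  measurable_fun setT f -> (forall x, `|f x| <= g x) ->
  mu.-integrable setT (fun x => (g x)%:E) -> mu.-integrable setT (fun x => (f x)%:E).
Proof.
move=> mf fg ig; apply: (le_integrable measurableT _ _ ig).
- exact/measurable_EFinP.
- move=> x _ /=; rewrite lee_fin (ger0_norm (le_trans (normr_ge0 _) (fg x))).
  exact: fg.
Qed.

Lemma integrableZl_EFin (k : R) (f : T -> R) :
  mu.-integrable setT (fun x => (f x)%:E) ->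
  mu.-integrable setT (fun x => (k * f x)%:E).
Proof.
move=> intf; under eq_fun do rewrite EFinM.
exact: integrableZl.
Qed.

Lemma integralZl_EFin (k : R) (f : T -> R) :
  mu.-integrable setT (fun x => (f x)%:E) ->
  (\int[mu]_x (k * f x)%:E = k%:E * \int[mu]_x (f x)%:E)%E.
Proof.
move=> intf; under eq_integral do rewrite EFinM.
exact: integralZl.
Qed.

(* Cauchy–Schwarz in the form [E[y^2] >= E[t y]^2 / E[t^2]], via the pointwise
   bound [y^2 >= 2 s t y - s^2 t^2] at [s = c / m]. *)
Lemma second_moment_ge (t y : T -> R) (c m : R) : 0 < m ->
  mu.-integrable setT (fun x => (t x * y x)%:E) ->
  mu.-integrable setT (fun x => (t x ^+ 2)%:E) ->
  mu.-integrable setT (fun x => (y x ^+ 2)%:E) ->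
  (\int[mu]_x (t x * y x)%:E = c%:E)%E ->
  (\int[mu]_x (t x ^+ 2)%:E <= m%:E)%E ->
  ((c ^+ 2 / m)%:E <= \int[mu]_x (y x ^+ 2)%:E)%E.
Proof.
move=> m_gt0 int_ty int_t2 int_y2 Ety Et2.
pose s := c / m.
have [r Et2E] : exists r, (\int[mu]_x (t x ^+ 2)%:E = r%:E)%E.
  by exists (fine (\int[mu]_x (t x ^+ 2)%:E)%E); rewrite fineK ?integrable_fin_num.
have r_le_m : r <= m by rewrite -lee_fin -Et2E.
have Ebound : (\int[mu]_x (2 * s * (t x * y x) - s ^+ 2 * t x ^+ 2)%:E =
    (2 * s * c - s ^+ 2 * r)%:E)%E.
  under eq_integral do rewrite EFinB.
  rewrite integralB_EFin //; [|exact: integrableZl_EFin..].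
  by rewrite !integralZl_EFin // Ety Et2E -!EFinM -EFinB.
apply: (@le_trans _ _ (2 * s * c - s ^+ 2 * r)%:E).
  rewrite lee_fin /s; have m_neq0 : m != 0 by rewrite gt_eqF.
  have := ler_wpM2l (sqr_ge0 (c / m)) r_le_m.
  have -> : c ^+ 2 / m = 2 * (c / m) * c - (c / m) ^+ 2 * m by field.
  lra.
rewrite -Ebound; apply: le_integral => //.
  under eq_fun do rewrite EFinB.
  by apply: integrableB => //; exact: integrableZl_EFin.
move=> x _; rewrite lee_fin.
have := sqr_ge0 (y x - s * t x); nra.
Qed.

End Integrals.

Ltac solve_measurable mf mg := repeat first [ apply: measurable_funB
  | apply: measurable_funD | apply: measurable_funM | apply: measurable_funX
  | exact: measurable_cst | exact: mf | exact: mg ].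

Section RandomUnitVector.
Context {d : measure_display} {T : measurableType d} {R : realType}.
Context {P : probability T R} {w : T -> 'cV[R]_2}.
Hypothesis mw : forall i, measurable_fun setT (fun x => w x i 0).
Hypothesis unit_w : forall x, w x 0 0 ^+ 2 + w x 1 0 ^+ 2 = 1.

Lemma integrable_norm_le1 (f : T -> R) : measurable_fun setT f ->
  (forall x, `|f x| <= 1) -> P.-integrable setT (fun x => (f x)%:E).
Proof.
move=> mf f_le1; apply: integrable_EFin_dominated mf f_le1 _.
exact: finite_measure_integrable_cst.
Qed.

Lemma integrable_sqr_coord i : P.-integrable setT (fun x => (w x i 0 * w x i 0)%:E).
Proof.
apply: integrable_norm_le1; first by solve_measurable mw mw.
move=> x; rewrite -expr2 ger0_norm ?sqr_ge0 //.
have := unit_w x; have := sqr_ge0 (w x 0 0); have := sqr_ge0 (w x 1 0).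
have [->|->] : i = 0 \/ i = 1 by case: i => [[|[|]]] //= ?; [left|right]; apply/val_inj.
  all: lra.
Qed.

Lemma integrable_sqr_mul_coord :
  P.-integrable setT (fun x => ((w x 0 0 * w x 1 0) ^+ 2)%:E).
Proof.
apply: integrable_norm_le1; first by solve_measurable mw mw.
by move=> x; rewrite ger0_norm ?sqr_ge0 ?sqr_mul_le1.
Qed.

Lemma integrable_sqr_double_mul_coord :
  P.-integrable setT (fun x => ((2 * (w x 0 0 * w x 1 0)) ^+ 2)%:E).
Proof.
under eq_fun do rewrite exprMn.
exact/integrableZl_EFin/integrable_sqr_mul_coord.
Qed.

Lemma integrable_double_mul_coord_mul (y : T -> R) : measurable_fun setT y ->
  P.-integrable setT (fun x => (y x ^+ 2)%:E) ->
  P.-integrable setT (fun x => (2 * (w x 0 0 * w x 1 0) * y x)%:E).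
Proof.
move=> my int_y2; apply: integrable_EFin_dominated (fun x => 1 + y x ^+ 2) _ _ _.
- by solve_measurable mw my.
- by move=> x; exact: norm_double_mul_le.
- under eq_fun do rewrite EFinD.
  exact/integrableD/int_y2/finite_measure_integrable_cst.
Qed.

Lemma integral_sqr_double_mul_coord_le_min {l1 l2 : R} :
  (\int[P]_x (w x 0 0 * w x 0 0)%:E = l1%:E)%E ->
  (\int[P]_x (w x 1 0 * w x 1 0)%:E = l2%:E)%E ->
  (\int[P]_x ((2 * (w x 0 0 * w x 1 0)) ^+ 2)%:E <= (4 * Num.min l1 l2)%:E)%E.
Proof.
move=> Ew0 Ew1; under eq_integral do rewrite exprMn.
rewrite integralZl_EFin ?integrable_sqr_mul_coord // -natrX EFinM lee_pmul2l ?lte_fin //.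
rewrite EFin_min le_min; apply/andP; split.
- rewrite -Ew0; apply: le_integral => //;
    [exact: integrable_sqr_mul_coord | exact: integrable_sqr_coord |].
  by move=> x _; rewrite lee_fin -expr2 sqr_mul_le_sqrl.
- rewrite -Ew1; apply: le_integral => //;
    [exact: integrable_sqr_mul_coord | exact: integrable_sqr_coord |].
  by move=> x _; rewrite lee_fin -expr2 sqr_mul_le_sqrr.
Qed.

End RandomUnitVector.

Lemma unbiased_offdiag_moment {d : measure_display} {T : measurableType d} {R : realType}
    {mu : measure T R} {w : T -> 'cV[R]_2} {H : T -> 'M[R]_2} :
  (forall L : 'M[R]_2, L^T = L -> forall i j,
     (\int[mu]_x (qform L (w x) * H x i j)%:E)%E = (L i j)%:E) ->
  (\int[mu]_x (2 * (w x 0 0 * w x 1 0) * H x 0 1)%:E = 1%:E)%E.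
Proof.
move=> unbiased; pose L0 : 'M[R]_2 := \matrix_(i, j) (i != j)%:R.
have L0_sym : L0^T = L0 by apply/matrixP => i j; rewrite !mxE eq_sym.
have -> : 1%:E = (L0 0 1)%:E :> \bar R by rewrite mxE.
rewrite -(unbiased L0 L0_sym); apply: eq_integral => x _.
by rewrite qform_offdiag_ones.
Qed.

Theorem mainTheorem14 (d : measure_display) (T : measurableType d)
  (R : realType) (P : probability T R) (l1 l2 : R)
  (w : T -> 'cV[R]_2) (H : T -> 'M[R]_2) :
  0 < l1 -> 0 < l2 -> l1 + l2 = 1 ->
  (forall i, measurable_fun setT (fun x => w x i 0)) ->
  (forall x, \sum_(i < 2) (w x i 0) ^+ 2 = 1) ->
  (forall i j, (\int[P]_x (w x i 0 * w x j 0)%:E)%E = (Wdiag l1 l2 i j)%:E) ->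
  (forall x, (H x)^T = H x) ->
  (forall i j, measurable_fun setT (fun x => H x i j)) ->
  (forall i j, P.-integrable setT (fun x => ((H x i j) ^+ 2)%:E)) ->
  (forall L : 'M[R]_2, L^T = L -> forall i j,
     (\int[P]_x (qform L (w x) * H x i j)%:E)%E = (L i j)%:E) ->
  forall (alpha : R) (L : 'M[R]_2), 0 < alpha -> L^T = L ->
  (forall v : 'cV[R]_2, alpha * qform 1%:M v <= qform L v) ->
  ((alpha ^+ 2 / (4 * Num.min l1 l2))%:E <=
     \int[P]_x (\tr (Wdiag l1 l2 *m ((qform L (w x) *: H x) *m (qform L (w x) *: H x))))%:E)%E.
Proof.
move=> l1_gt0 l2_gt0 l12 mw w_sum1 EwwT H_sym mH H_L2 unbiased alpha L alpha_gt0 _ L_ge.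
have unit_w x : w x 0 0 ^+ 2 + w x 1 0 ^+ 2 = 1.
  by have := w_sum1 x; rewrite !big_ord_recl big_ord0 -ord2_zeroE -ord2_oneE addr0.
have Ew0 := EwwT 0 0; have Ew1 := EwwT 1 1; rewrite Wdiag00 in Ew0; rewrite Wdiag11 in Ew1.
have Et_H01 := unbiased_offdiag_moment unbiased.
have EH01 : ((1 ^+ 2 / (4 * Num.min l1 l2))%:E <= \int[P]_x (H x 0 1 ^+ 2)%:E)%E.
  apply: second_moment_ge Et_H01 (integral_sqr_double_mul_coord_le_min mw unit_w Ew0 Ew1).
  - by rewrite mulr_gt0 // lt_min l1_gt0.
  - exact: integrable_double_mul_coord_mul.
  - exact: integrable_sqr_double_mul_coord.
  - exact: H_L2.
apply: (@le_trans _ _ (\int[P]_x (alpha ^+ 2 * H x 0 1 ^+ 2)%:E)%E).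
  have -> : alpha ^+ 2 / (4 * Num.min l1 l2) = alpha ^+ 2 * (1 ^+ 2 / (4 * Num.min l1 l2)).
    by rewrite expr1n mul1r.
  by rewrite integralZl_EFin // EFinM lee_pmul2l ?lte_fin ?exprn_gt0.
apply: ge0_le_integral => //.
- by move=> x _; rewrite lee_fin mulr_ge0 ?sqr_ge0.
- by apply/measurable_EFinP; solve_measurable mw mH.
- apply/measurable_EFinP; under eq_fun do rewrite mxtrace_Wdiag_scale_sqr qform2E.
  by solve_measurable mw mH.
move=> x _; rewrite lee_fin; apply: sqr_offdiag_le_trace => //; try exact: ltW.
- by have := H_sym x; move/matrixP/(_ 0 1); rewrite mxE.
- by rewrite (ltW alpha_gt0) /=; have := L_ge (w x); rewrite qform1_unit ?mulr1.
Qed.
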